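(* Let $N\ge 3$ and integers $0\le j\le i<N-1$. Let $c$ be a class, and let $A\subseteq B$ be sets of classes with $c\in A$, $|A|=N-i$, $|B|=N-j$. Let sample $s_1$ have class uniformly distributed on $A$ and sample $s_2$ have class uniformly distributed on $B$, independently. In a $3$IC query of $s_1,s_2$ with the representative of class $c$, define the number of settled samples to be $2$ if both $s_1$ and $s_2$ have class $c$; $1$ if exactly one of them has class $c$, or if neither has class $c$ but $s_1$ and $s_2$ have the same class; and $0$ otherwise. Then the expected number of settled samples is $$SL=\frac{2(N-i)+(N-j-1)}{(N-i)(N-j)}.$$
   Context: This models one query of a greedy round-robin triplet ($3$IC) labeling algorithm on a dataset with $N$ equally likely classes: the length of a sample is the number of class representatives it has already been (unsuccessfully) compared with, so a sample of length $i$ is uniformly distributed over the $N-i$ classes not yet excluded; $s_1$ has length $i$, $s_2$ has length $j$, and the classes excluded for $s_2$ are among those excluded for $s_1$. A $3$IC query presents three items to an error-free oracle that reports which of them share a class; when $s_1,s_2$ match each other but not the representative, one of them is merged into the other and counted as settled. *)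

From mathcomp Require Import all_boot all_order all_algebra.
Set Implicit Arguments. Unset Strict Implicit. Unset Printing Implicit Defensive.
Import Order.TTheory GRing.Theory Num.Theory.

Definition settled (N : nat) (c a b : 'I_N) : nat :=
  if (a == c) && (b == c) then 2
  else if (a == c) || (b == c) then 1
  else if a == b then 1
  else 0.

(* Expected number of settled samples when the class of s1 is uniform on A and
   the class of s2 is uniform on B, independently (product of the two uniform
   distributions). *)
Definition expected_settled (R : realFieldType) (N : nat) (c : 'I_N)
    (A B : {set 'I_N}) : R :=
  \sum_(a in A) \sum_(b in B)
     ((settled c a b)%:R / (#|A|%:R * #|B|%:R)).

(* Split the number of settled samples into three indicators: [s1] has class
   [c], [s2] has class [c], and [s1] misses [c] but shares its class with
   [s2].  Summed over [A x B] they count [|B|], [|A|] and [|A| - 1] pairs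
   respectively (the last because [A \subset B]), so the expectation is
   [(2|A| + |B| - 1) / (|A| |B|)]. *)

From mathcomp Require Import all_boot all_order all_algebra.
From mathcomp Require Import zify.
Set Implicit Arguments. Unset Strict Implicit. Unset Printing Implicit Defensive.
Import Order.TTheory GRing.Theory Num.Theory.
Local Open Scope ring_scope.

Lemma settledE N (c a b : 'I_N) :
  settled c a b = ((a == c) + (b == c) + ((a != c) && (a == b)))%N.
Proof.
rewrite /settled; case: (eqVneq a b) => [<-|ab]; first by case: (a == c).
by case: (eqVneq a c) => [ac|ac]; case: (eqVneq b c).
Qed.

Lemma sum_eq_mem (T : finType) (B : {set T}) (c : T) :
  c \in B -> (\sum_(b in B) (b == c) = 1)%N.
Proof.
by move=> cB; rewrite (bigD1 c) //= eqxx big1 // => b /andP[_ /negbTE->].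
Qed.

Lemma sum_neq_mem (T : finType) (A : {set T}) (c : T) :
  c \in A -> (\sum_(a in A) (a != c) = #|A|.-1)%N.
Proof.
move=> cA; suff -> : #|A| = (1 + \sum_(a in A) (a != c))%N by [].
rewrite -(sum_eq_mem cA) -big_split -sum1_card /=.
by apply: eq_bigr => a _; case: eqP.
Qed.

Lemma sum_settled N (c : 'I_N) (A B : {set 'I_N}) :
  c \in A -> A \subset B ->
  (\sum_(a in A) \sum_(b in B) settled c a b = #|B| + #|A| + #|A|.-1)%N.
Proof.
move=> cA AB; have cB := subsetP AB c cA.
have share_in_B a : a \in A ->
    (\sum_(b in B) ((a != c) && (a == b)) = (a != c))%N.
  move=> aA; case: (eqVneq a c) => [_|_] /=; first by rewrite big1.
  by under eq_bigr => b _ do rewrite eq_sym; rewrite sum_eq_mem // (subsetP AB).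
under eq_bigr => a aA.
  under eq_bigr => b _ do rewrite settledE.
  rewrite !big_split /= sum_nat_const (sum_eq_mem cB) share_in_B //.
  over.
rewrite !big_split /= -big_distrr /= (sum_eq_mem cA) sum1_card (sum_neq_mem cA).
by rewrite muln1.
Qed.

Lemma expected_settledE (R : realFieldType) N (c : 'I_N) (A B : {set 'I_N}) :
  expected_settled R c A B =
    (\sum_(a in A) \sum_(b in B) settled c a b)%N%:R / (#|A| * #|B|)%N%:R.
Proof.
rewrite /expected_settled natr_sum mulr_suml natrM.
by apply: eq_bigr => a _; rewrite natr_sum mulr_suml.
Qed.

Theorem lemma2 (R : realFieldType) (N i j : nat) (c : 'I_N)
    (A B : {set 'I_N}) :
  (3 <= N)%N -> (j <= i)%N -> (i < N - 1)%N ->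
  c \in A -> A \subset B -> #|A| = (N - i)%N -> #|B| = (N - j)%N ->
  expected_settled R c A B =
    ((2 * (N - i) + (N - j - 1))%N)%:R / (((N - i) * (N - j))%N)%:R.
Proof.
move=> _ ji iN cA AB cardA cardB.
rewrite expected_settledE sum_settled // cardA cardB.
by congr (_%:R / _); lia.
Qed.
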